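(* For any set $X$, the free inverse monoid $\operatorname{FIM}(X)$, regarded as an $F$-inverse monoid, is given by the presentation $\operatorname{FInv}\langle X\mid \operatorname{red}(w)=w^{\mathfrak m},\ w\in(X\cup X^{-1})^*\rangle$.
   Context: $\operatorname{FIM}(X)$ is $F$-inverse, with $(w_{\operatorname{FIM}(X)})^{\mathfrak m}=\operatorname{red}(w)_{\operatorname{FIM}(X)}$, where $\operatorname{red}(w)$ is the freely reduced form of the word $w$ and $s^{\mathfrak m}$ denotes the greatest element of the $\sigma$-class of $s$ (the $F$-inverse monoid signature being $(\cdot,1,{}^{-1},{}^{\mathfrak m})$). $\operatorname{FInv}\langle X\mid R\rangle$ denotes the quotient of the free $F$-inverse monoid on $X$ by the congruence generated by the relation $R$ on terms $u_0v_1^{\mathfrak m}u_1\cdots v_n^{\mathfrak m}u_n$ ($u_i,v_i\in(X\cup X^{-1})^*$). The claim is that this presented $F$-inverse monoid is isomorphic to $\operatorname{FIM}(X)$ via the map sending each generator $x$ to $x$. *)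

From Stdlib Require Import List Relations.
Import ListNotations.
Set Implicit Arguments.

Record InvMonoid := {
  im_car :> Type;
  im_mul : im_car -> im_car -> im_car;
  im_one : im_car;
  im_inv : im_car -> im_car;
  im_assoc : forall a b c, im_mul a (im_mul b c) = im_mul (im_mul a b) c;
  im_mul1 : forall a, im_mul im_one a = a;
  im_mulr1 : forall a, im_mul a im_one = a;
  im_inv_r : forall a, im_mul (im_mul a (im_inv a)) a = a;
  im_inv_l : forall a, im_mul (im_mul (im_inv a) a) (im_inv a) = im_inv a;
  im_idem_comm : forall e f, im_mul e e = e -> im_mul f f = f ->
                 im_mul e f = im_mul f e
}.

Arguments im_mul {_}. Arguments im_one {_}. Arguments im_inv {_}.

Definition idempotent {M : InvMonoid} (e : M) : Prop := im_mul e e = e.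

Definition nat_le {M : InvMonoid} (a b : M) : Prop :=
  exists e : M, idempotent e /\ a = im_mul e b.

Definition sigma_rel {M : InvMonoid} (a b : M) : Prop :=
  exists e : M, idempotent e /\ im_mul e a = im_mul e b.

Definition sigma_max {M : InvMonoid} (a m : M) : Prop :=
  sigma_rel m a /\ forall b : M, sigma_rel b a -> nat_le b m.

Record FInvMonoid := {
  fim_base :> InvMonoid;
  fim_m : fim_base -> fim_base;
  fim_m_max : forall a : fim_base, sigma_max a (fim_m a)
}.

Arguments fim_m {_}.

Definition inv_monoid_morphism {M N : InvMonoid} (g : M -> N) : Prop :=
  (forall a b, g (im_mul a b) = im_mul (g a) (g b)) /\
  g im_one = im_one /\
  (forall a, g (im_inv a) = im_inv (g a)).

Definition finv_morphism {M N : FInvMonoid} (g : M -> N) : Prop :=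
  inv_monoid_morphism g /\ (forall a, g (fim_m a) = fim_m (g a)).

(** * Words over X u X^{-1}: [inl x] is x, [inr x] is x^{-1} *)
Definition letter (X : Type) := (X + X)%type.
Definition word (X : Type) := list (letter X).

Definition letter_inv (X : Type) (a : letter X) : letter X :=
  match a with inl x => inr x | inr x => inl x end.

Inductive free_step (X : Type) : word X -> word X -> Prop :=
| free_step_intro : forall (w1 w2 : word X) (a : letter X),
    free_step (w1 ++ a :: letter_inv a :: w2) (w1 ++ w2).

Definition freely_reduced (X : Type) (w : word X) : Prop :=
  forall w', ~ free_step w w'.

Definition is_red (X : Type) (w r : word X) : Prop :=
  clos_refl_trans (word X) (@free_step X) w r /\ freely_reduced r.

Definition eval_letter {X : Type} {M : InvMonoid} (f : X -> M) (a : letter X) : M :=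
  match a with inl x => f x | inr x => im_inv (f x) end.

Definition eval_word {X : Type} {M : InvMonoid} (f : X -> M) (w : word X) : M :=
  fold_right (fun a acc => im_mul (eval_letter f a) acc) im_one w.

(** * Terms u0 v1^m u1 ... vn^m un, represented as (u0, [(v1,u1);...;(vn,un)]) *)
Definition fterm (X : Type) := (word X * list (word X * word X))%type.

Definition eval_fterm {X : Type} {M : FInvMonoid} (f : X -> M) (t : fterm X) : M :=
  im_mul (eval_word f (fst t))
    (fold_right (fun vu acc =>
        im_mul (im_mul (fim_m (eval_word f (fst vu))) (eval_word f (snd vu))) acc)
      im_one (snd t)).

Definition satisfies {X : Type} (R : fterm X -> fterm X -> Prop)
  {M : FInvMonoid} (f : X -> M) : Prop :=
  forall t s, R t s -> eval_fterm f t = eval_fterm f s.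

(** [iP : X -> P] presents FInv<X | R>: P is the quotient of the free
    F-inverse monoid on X by the congruence generated by R, characterised
    (up to isomorphism over X) by its universal property. *)
Definition is_FInv_presentation {X : Type} (R : fterm X -> fterm X -> Prop)
  {P : FInvMonoid} (iP : X -> P) : Prop :=
  satisfies R iP /\
  (forall (N : FInvMonoid) (f : X -> N), satisfies R f ->
     exists g : P -> N, finv_morphism g /\ forall x, g (iP x) = f x) /\
  (forall (N : FInvMonoid) (g1 g2 : P -> N), finv_morphism g1 -> finv_morphism g2 ->
     (forall x, g1 (iP x) = g2 (iP x)) -> forall a, g1 a = g2 a).

Definition is_free_inverse_monoid {X : Type} {F : InvMonoid} (iF : X -> F) : Prop :=
  (forall (N : InvMonoid) (f : X -> N),
     exists g : F -> N, inv_monoid_morphism g /\ forall x, g (iF x) = f x) /\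
  (forall (N : InvMonoid) (g1 g2 : F -> N), inv_monoid_morphism g1 ->
     inv_monoid_morphism g2 -> (forall x, g1 (iF x) = g2 (iF x)) ->
     forall a, g1 a = g2 a).

Definition word_fterm (X : Type) (w : word X) : fterm X := (w, []).
Definition m_fterm (X : Type) (w : word X) : fterm X := ([], [(w, [])]).

Definition fim_relations (X : Type) : fterm X -> fterm X -> Prop :=
  fun t s => exists w r : word X, is_red w r /\ t = word_fterm r /\ s = m_fterm w.

(** The canonical map θ from FIM(X) to the free group, realised as reduced
    words, sends idempotents to 1, so σ-related elements have the same image;
    and every word w lies below red(w) in the natural order.  Hence
    a ↦ red(θ a), read back in FIM(X), is the greatest element of the σ-class
    of a, making FIM(X) an F-inverse monoid in which red(w) = w^m holds.  The
    presentation then yields an F-morphism P → FIM(X), freeness an inverse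
    morphism FIM(X) → P, which respects ^m precisely because P satisfies the
    relations red(w) = w^m, and the uniqueness clauses make them mutually
    inverse. *)
From Stdlib Require Import List Relations ClassicalEpsilon ProofIrrelevance.
Import ListNotations.
Set Implicit Arguments.

Local Infix "⋅" := im_mul (at level 40, left associativity).

Ltac assoc_eq := repeat rewrite im_assoc; reflexivity.

Section InverseMonoid.
Variable M : InvMonoid.

Lemma idempotent_mul_inv (a : M) : idempotent (a ⋅ im_inv a).
Proof. unfold idempotent. rewrite im_assoc, im_inv_r. reflexivity. Qed.

Lemma idempotent_inv_mul (a : M) : idempotent (im_inv a ⋅ a).
Proof. unfold idempotent. rewrite im_assoc, im_inv_l. reflexivity. Qed.

Lemma idempotent_one : idempotent (@im_one M).
Proof. apply im_mul1. Qed.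

Lemma inv_unique (a x : M) : a ⋅ x ⋅ a = a -> x ⋅ a ⋅ x = x -> x = im_inv a.
Proof.
  intros Hax Hxa.
  pose proof (im_inv_r _ a) as Hay; pose proof (im_inv_l _ a) as Hya.
  set (y := im_inv a) in *.
  assert (Ixa : idempotent (x ⋅ a)) by (unfold idempotent; rewrite im_assoc, Hxa; reflexivity).
  assert (Iya : idempotent (y ⋅ a)) by (unfold idempotent; rewrite im_assoc, Hya; reflexivity).
  assert (Iax : idempotent (a ⋅ x)) by (unfold idempotent; rewrite im_assoc, Hax; reflexivity).
  assert (Iay : idempotent (a ⋅ y)) by (unfold idempotent; rewrite im_assoc, Hay; reflexivity).
  assert (Ex : x = y ⋅ a ⋅ x).
  { transitivity (x ⋅ (a ⋅ y ⋅ a) ⋅ x). { rewrite Hay; symmetry; exact Hxa. }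
    transitivity ((x ⋅ a) ⋅ (y ⋅ a) ⋅ x). { assoc_eq. }
    rewrite (im_idem_comm _ Ixa Iya).
    transitivity (y ⋅ a ⋅ (x ⋅ a ⋅ x)). { assoc_eq. }
    rewrite Hxa; reflexivity. }
  assert (Ey : y = y ⋅ a ⋅ x).
  { transitivity (y ⋅ (a ⋅ x ⋅ a) ⋅ y). { rewrite Hax; symmetry; exact Hya. }
    transitivity (y ⋅ ((a ⋅ x) ⋅ (a ⋅ y))). { assoc_eq. }
    rewrite (im_idem_comm _ Iax Iay).
    transitivity ((y ⋅ a ⋅ y) ⋅ a ⋅ x). { assoc_eq. }
    rewrite Hya; reflexivity. }
  rewrite Ey. exact Ex.
Qed.

Lemma inv_invol (a : M) : im_inv (im_inv a) = a.
Proof. symmetry. apply inv_unique; [apply im_inv_l | apply im_inv_r]. Qed.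

Lemma inv_one : im_inv (@im_one M) = im_one.
Proof. pose proof (im_inv_r _ (@im_one M)) as H. rewrite im_mul1, im_mulr1 in H. exact H. Qed.

Lemma inv_mul (a b : M) : im_inv (a ⋅ b) = im_inv b ⋅ im_inv a.
Proof.
  symmetry. apply inv_unique.
  - transitivity (a ⋅ ((b ⋅ im_inv b) ⋅ (im_inv a ⋅ a)) ⋅ b). { assoc_eq. }
    rewrite (im_idem_comm _ (idempotent_mul_inv b) (idempotent_inv_mul a)).
    transitivity ((a ⋅ im_inv a ⋅ a) ⋅ (b ⋅ im_inv b ⋅ b)). { assoc_eq. }
    rewrite !im_inv_r. reflexivity.
  - transitivity (im_inv b ⋅ ((im_inv a ⋅ a) ⋅ (b ⋅ im_inv b)) ⋅ im_inv a). { assoc_eq. }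
    rewrite (im_idem_comm _ (idempotent_inv_mul a) (idempotent_mul_inv b)).
    transitivity ((im_inv b ⋅ b ⋅ im_inv b) ⋅ (im_inv a ⋅ a ⋅ im_inv a)). { assoc_eq. }
    rewrite !im_inv_l. reflexivity.
Qed.

Lemma nat_le_refl (x : M) : nat_le x x.
Proof. exists im_one. split; [apply idempotent_one | symmetry; apply im_mul1]. Qed.

Lemma nat_le_trans (x y z : M) : nat_le x y -> nat_le y z -> nat_le x z.
Proof.
  intros [e [He ->]] [f [Hf ->]]. exists (e ⋅ f). split; [|apply im_assoc].
  unfold idempotent in *.
  transitivity (e ⋅ (f ⋅ e) ⋅ f). { assoc_eq. }
  rewrite <- (im_idem_comm _ He Hf).
  transitivity ((e ⋅ e) ⋅ (f ⋅ f)). { assoc_eq. }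
  rewrite He, Hf; reflexivity.
Qed.

Lemma nat_le_idempotent_mul (e x : M) : idempotent e -> nat_le (e ⋅ x) x.
Proof. intros He. exists e. auto. Qed.

(* z e z^-1 is the idempotent witnessing z (e y) <= z y. *)
Lemma nat_le_mull (z x y : M) : nat_le x y -> nat_le (z ⋅ x) (z ⋅ y).
Proof.
  intros [e [He ->]].
  assert (Hconj : z ⋅ e ⋅ im_inv z ⋅ z = z ⋅ e).
  { transitivity (z ⋅ (e ⋅ (im_inv z ⋅ z))). { assoc_eq. }
    rewrite (im_idem_comm _ He (idempotent_inv_mul z)).
    transitivity ((z ⋅ im_inv z ⋅ z) ⋅ e). { assoc_eq. }
    rewrite im_inv_r; reflexivity. }
  exists (z ⋅ e ⋅ im_inv z). split.
  - unfold idempotent in *.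
    transitivity ((z ⋅ e ⋅ im_inv z ⋅ z) ⋅ e ⋅ im_inv z). { assoc_eq. }
    rewrite Hconj. transitivity (z ⋅ (e ⋅ e) ⋅ im_inv z). { assoc_eq. }
    rewrite He; reflexivity.
  - transitivity ((z ⋅ e ⋅ im_inv z ⋅ z) ⋅ y). { rewrite Hconj. assoc_eq. }
    assoc_eq.
Qed.

Lemma sigma_rel_of_nat_le (x y : M) : nat_le x y -> sigma_rel y x.
Proof. intros [e [He ->]]. exists e. split; auto. rewrite im_assoc, He. reflexivity. Qed.

End InverseMonoid.

Lemma inv_monoid_morphism_id (M : InvMonoid) : inv_monoid_morphism (fun a : M => a).
Proof. repeat split. Qed.

Lemma inv_monoid_morphism_comp (M N K : InvMonoid) (g : M -> N) (h : N -> K) :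
  inv_monoid_morphism g -> inv_monoid_morphism h ->
  inv_monoid_morphism (fun a => h (g a)).
Proof.
  intros [gM [g1 gV]] [hM [h1 hV]]. repeat split; intros.
  - rewrite gM; auto.
  - rewrite g1; auto.
  - rewrite gV; auto.
Qed.

Lemma sig_eq {A : Type} {P : A -> Prop} (a b : sig P) : proj1_sig a = proj1_sig b -> a = b.
Proof. destruct a, b; simpl; intros; subst; f_equal; apply proof_irrelevance. Qed.

Section FreeGroup.
Variable X : Type.

Definition word_inv (w : word X) : word X := rev (map (@letter_inv X) w).

Lemma letter_inv_invol (a : letter X) : letter_inv (letter_inv a) = a.
Proof. destruct a; reflexivity. Qed.

Lemma word_inv_invol (w : word X) : word_inv (word_inv w) = w.
Proof.
  unfold word_inv. rewrite map_rev, map_map, rev_involutive.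
  erewrite map_ext; [apply map_id | apply letter_inv_invol].
Qed.

(* Letters of X are not assumed to have decidable equality, hence the
   classical test in [push]. *)
Definition push (a : letter X) (s : word X) : word X :=
  match s with
  | [] => [a]
  | b :: s' => if excluded_middle_informative (b = letter_inv a) then s' else a :: b :: s'
  end.

(* [act w s] is red(w s) when s is reduced. *)
Fixpoint act (w s : word X) : word X :=
  match w with [] => s | a :: w' => push a (act w' s) end.

Fixpoint reduced (w : word X) : Prop :=
  match w with
  | [] => True
  | a :: s => match s with [] => True | b :: _ => b <> letter_inv a /\ reduced s end
  end.

Lemma reduced_tail a s : reduced (a :: s) -> reduced s.
Proof. destruct s; simpl; tauto. Qed.

Lemma reduced_push a s : reduced s -> reduced (push a s).
Proof.
  destruct s as [|b s]; simpl; intros H; auto.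
  destruct (excluded_middle_informative _); [exact (reduced_tail _ _ H) | simpl; auto].
Qed.

Lemma reduced_act w s : reduced s -> reduced (act w s).
Proof. induction w; simpl; auto using reduced_push. Qed.

Lemma reduced_act_nil w : reduced (act w []).
Proof. apply reduced_act. exact I. Qed.

Lemma push_inv_push a s : reduced s -> push (letter_inv a) (push a s) = s.
Proof.
  destruct s as [|b s]; intros H; simpl.
  - destruct (excluded_middle_informative _) as [E|E]; auto.
    exfalso; apply E; symmetry; apply letter_inv_invol.
  - destruct (excluded_middle_informative (b = letter_inv a)) as [->|E].
    + destruct s as [|c s]; simpl; auto.
      destruct (excluded_middle_informative _); auto.
      exfalso. simpl in H. tauto.
    + simpl. destruct (excluded_middle_informative _) as [E'|E']; auto.
      exfalso; apply E'; symmetry; apply letter_inv_invol.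
Qed.

Lemma push_push_inv a s : reduced s -> push a (push (letter_inv a) s) = s.
Proof. intros H. rewrite <- (letter_inv_invol a) at 1. apply push_inv_push, H. Qed.

Lemma push_act a u s : reduced u -> reduced s -> push a (act u s) = act (push a u) s.
Proof.
  destruct u as [|b u]; intros Hu Hs; simpl; auto.
  destruct (excluded_middle_informative (b = letter_inv a)) as [->|E]; auto.
  apply push_push_inv, reduced_act, Hs.
Qed.

Lemma act_app w1 w2 s : act (w1 ++ w2) s = act w1 (act w2 s).
Proof. induction w1; simpl; congruence. Qed.

Lemma act_reduced_nil r : reduced r -> act r [] = r.
Proof.
  induction r as [|a r IH]; simpl; intros H; auto.
  rewrite IH by exact (reduced_tail _ _ H).
  destruct r as [|b r]; simpl; auto.
  destruct (excluded_middle_informative _); auto.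
  exfalso. simpl in H. tauto.
Qed.

Lemma act_act_nil w s : reduced s -> act w s = act (act w []) s.
Proof.
  induction w as [|a w IH]; simpl; intros Hs; auto.
  rewrite IH by auto. apply push_act; auto using reduced_act_nil.
Qed.

Lemma act_assoc r s t : reduced s -> reduced t -> act (act r s) t = act r (act s t).
Proof.
  intros Hs Ht. rewrite <- act_app, (act_act_nil (r ++ s) t Ht), act_app.
  rewrite (act_reduced_nil s Hs). reflexivity.
Qed.

Lemma act_word_inv_act r t : reduced t -> act (word_inv r) (act r t) = t.
Proof.
  induction r as [|a r IH]; simpl; intros Ht; auto.
  unfold word_inv in *. simpl. rewrite act_app. simpl.
  rewrite push_inv_push by (apply reduced_act, Ht). auto.
Qed.

Lemma act_act_word_inv r t : reduced t -> act r (act (word_inv r) t) = t.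
Proof.
  intros Ht. rewrite <- (word_inv_invol r) at 1. apply act_word_inv_act, Ht.
Qed.

Definition fg_car := { r : word X | reduced r }.

Definition fg_mul (a b : fg_car) : fg_car :=
  exist _ (act (proj1_sig a) (proj1_sig b)) (reduced_act _ _ (proj2_sig b)).
Definition fg_one : fg_car := exist _ [] I.
Definition fg_inv (a : fg_car) : fg_car :=
  exist _ (act (word_inv (proj1_sig a)) []) (reduced_act_nil _).

Lemma fg_mulA a b c : fg_mul a (fg_mul b c) = fg_mul (fg_mul a b) c.
Proof. apply sig_eq; simpl. symmetry; apply act_assoc; [apply (proj2_sig b) | apply (proj2_sig c)]. Qed.

Lemma fg_mul1 a : fg_mul fg_one a = a.
Proof. apply sig_eq; reflexivity. Qed.

Lemma fg_mulr1 a : fg_mul a fg_one = a.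
Proof. apply sig_eq; simpl. apply act_reduced_nil, (proj2_sig a). Qed.

Lemma fg_mulV a : fg_mul a (fg_inv a) = fg_one.
Proof. apply sig_eq; simpl. apply act_act_word_inv. exact I. Qed.

Lemma fg_mulVr a : fg_mul (fg_inv a) a = fg_one.
Proof.
  apply sig_eq; simpl. destruct a as [r Hr]; simpl.
  rewrite <- act_act_nil by exact Hr.
  rewrite <- (act_reduced_nil r Hr) at 2. apply act_word_inv_act. exact I.
Qed.

Lemma fg_idempotent_one e : fg_mul e e = e -> e = fg_one.
Proof.
  intros H. transitivity (fg_mul e (fg_mul e (fg_inv e))).
  - rewrite fg_mulV, fg_mulr1. reflexivity.
  - rewrite fg_mulA, H. apply fg_mulV.
Qed.

Definition FG : InvMonoid.
Proof.
  refine (@Build_InvMonoid fg_car fg_mul fg_one fg_inv fg_mulA fg_mul1 fg_mulr1 _ _ _).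
  - intros a. rewrite fg_mulV, fg_mul1. reflexivity.
  - intros a. rewrite fg_mulVr, fg_mul1. reflexivity.
  - intros e f He Hf. rewrite (fg_idempotent_one He), (fg_idempotent_one Hf). reflexivity.
Defined.

Definition fg_gen (x : X) : FG := exist _ [inl x] I.

Lemma fg_eval_word w : proj1_sig (eval_word fg_gen w) = act w [].
Proof. induction w as [|[x|x] w IH]; simpl; rewrite ?IH; reflexivity. Qed.

Lemma free_step_cons a (u v : word X) : free_step u v -> free_step (a :: u) (a :: v).
Proof. intros [w1 w2 b]. exact (free_step_intro (a :: w1) w2 b). Qed.

Lemma free_steps_cons a (u v : word X) :
  clos_refl_trans _ (@free_step X) u v ->
  clos_refl_trans _ (@free_step X) (a :: u) (a :: v).
Proof.
  induction 1; [apply rt_step, free_step_cons; auto | apply rt_refl | eapply rt_trans; eauto].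
Qed.

Lemma free_steps_act w : clos_refl_trans _ (@free_step X) w (act w []).
Proof.
  induction w as [|a w IH]; simpl; [apply rt_refl|].
  eapply rt_trans; [apply free_steps_cons, IH|].
  destruct (act w []) as [|b u]; simpl; [apply rt_refl|].
  destruct (excluded_middle_informative _) as [->|E]; [|apply rt_refl].
  apply rt_step. exact (free_step_intro [] u a).
Qed.

Lemma act_free_steps u v : clos_refl_trans _ (@free_step X) u v -> act u [] = act v [].
Proof.
  induction 1 as [u v [w1 w2 a]| |]; try congruence.
  rewrite !act_app. simpl. rewrite push_push_inv; auto using reduced_act_nil.
Qed.

Lemma reduced_of_freely_reduced r : freely_reduced r -> reduced r.
Proof.
  induction r as [|a r IH]; simpl; intros H; auto.
  destruct r as [|b r]; auto. split.
  - intros ->. apply (H r). exact (free_step_intro [] r a).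
  - apply IH. intros w' Hs. apply (H (a :: w')), free_step_cons, Hs.
Qed.

Lemma freely_reduced_of_reduced r : reduced r -> freely_reduced r.
Proof.
  intros H w' Hstep. revert H. destruct Hstep as [w1 w2 a].
  induction w1 as [|c w1 IH]; simpl; intros H.
  - destruct H as [H _]. apply H; reflexivity.
  - apply IH. exact (reduced_tail _ _ H).
Qed.

Lemma is_red_act w : is_red w (act w []).
Proof.
  split; [apply free_steps_act | apply freely_reduced_of_reduced, reduced_act_nil].
Qed.

Lemma is_red_act_eq w r : is_red w r -> r = act w [].
Proof.
  intros [Hwr Hr]. rewrite (act_free_steps Hwr).
  symmetry. apply act_reduced_nil, reduced_of_freely_reduced, Hr.
Qed.

End FreeGroup.

Arguments act {X}. Arguments word_inv {X}. Arguments fg_gen {X}.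

Section EvalWord.
Variables (X : Type) (M : InvMonoid) (f : X -> M).

Lemma eval_word_app u v : eval_word f (u ++ v) = eval_word f u ⋅ eval_word f v.
Proof.
  induction u as [|a u IH]; simpl; [symmetry; apply im_mul1|].
  rewrite IH. apply im_assoc.
Qed.

Lemma eval_letter_inv a : eval_letter f (letter_inv a) = im_inv (eval_letter f a).
Proof. destruct a; simpl; auto. symmetry; apply inv_invol. Qed.

Lemma eval_word_inv w : eval_word f (word_inv w) = im_inv (eval_word f w).
Proof.
  induction w as [|a w IH]; simpl; [symmetry; apply inv_one|].
  unfold word_inv in *. simpl.
  rewrite eval_word_app, IH, inv_mul. simpl. rewrite im_mulr1, eval_letter_inv. reflexivity.
Qed.

Lemma eval_word_ext (f' : X -> M) w :
  (forall x, f x = f' x) -> eval_word f w = eval_word f' w.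
Proof. intros H. induction w as [|[x|x] w IH]; simpl; rewrite ?IH, ?H; reflexivity. Qed.

Lemma eval_word_morphism (N : InvMonoid) (g : M -> N) w :
  inv_monoid_morphism g -> g (eval_word f w) = eval_word (fun x => g (f x)) w.
Proof.
  intros [gM [g1 gV]]. induction w as [|[x|x] w IH]; simpl; rewrite ?gM, ?IH, ?gV; auto.
Qed.

(* Cancelling a a^{-1} only multiplies by the idempotent a a^{-1}. *)
Lemma nat_le_eval_push a u :
  nat_le (eval_letter f a ⋅ eval_word f u) (eval_word f (push a u)).
Proof.
  destruct u as [|b u]; simpl; [apply nat_le_refl|].
  destruct (excluded_middle_informative _) as [->|E]; [|apply nat_le_refl].
  simpl. rewrite eval_letter_inv, im_assoc. apply nat_le_idempotent_mul, idempotent_mul_inv.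
Qed.

Lemma nat_le_eval_red w : nat_le (eval_word f w) (eval_word f (act w [])).
Proof.
  induction w as [|a w IH]; simpl; [apply nat_le_refl|].
  eapply nat_le_trans; [apply nat_le_mull, IH | apply nat_le_eval_push].
Qed.

End EvalWord.

Lemma eval_relation_fterms (X : Type) {N : FInvMonoid} (g : X -> N) w r :
  eval_fterm g (word_fterm r) = eval_word g r /\
  eval_fterm g (m_fterm w) = fim_m (eval_word g w).
Proof. unfold eval_fterm; simpl. rewrite !im_mulr1, im_mul1. auto. Qed.

Section FreeInverseMonoid.
Variables (X : Type) (F : InvMonoid) (iF : X -> F).

Definition word_image := { a : F | exists w, eval_word iF w = a }.

Definition word_image_mul (a b : word_image) : word_image.
Proof.
  exists (proj1_sig a ⋅ proj1_sig b).
  destruct (proj2_sig a) as [u Hu], (proj2_sig b) as [v Hv].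
  exists (u ++ v). rewrite eval_word_app, Hu, Hv. reflexivity.
Defined.

Definition word_image_inv (a : word_image) : word_image.
Proof.
  exists (im_inv (proj1_sig a)).
  destruct (proj2_sig a) as [w Hw]. exists (word_inv w).
  rewrite eval_word_inv, Hw. reflexivity.
Defined.

Definition WordImage : InvMonoid.
Proof.
  refine (@Build_InvMonoid word_image word_image_mul
            (exist _ im_one (ex_intro _ [] eq_refl)) word_image_inv _ _ _ _ _ _);
    intros; apply sig_eq; simpl.
  - apply im_assoc.
  - apply im_mul1.
  - apply im_mulr1.
  - apply im_inv_r.
  - apply im_inv_l.
  - apply im_idem_comm; [exact (f_equal (@proj1_sig _ _) H) | exact (f_equal (@proj1_sig _ _) H0)].
Defined.

Definition word_image_gen (x : X) : WordImage :=
  exist _ (iF x) (ex_intro _ [inl x] (im_mulr1 _ _)).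

Variable HF : is_free_inverse_monoid iF.

Lemma fim_generated (a : F) : exists w, eval_word iF w = a.
Proof.
  destruct HF as [Huniv Huniq].
  destruct (Huniv WordImage word_image_gen) as [g [Hg Hgx]].
  assert (Hval : inv_monoid_morphism (fun b : WordImage => proj1_sig b)) by repeat split.
  assert (E : proj1_sig (g a) = a).
  { apply (Huniq F (fun b => proj1_sig (g b)) (fun b => b)).
    - exact (inv_monoid_morphism_comp Hg Hval).
    - apply inv_monoid_morphism_id.
    - intros x. rewrite Hgx. reflexivity. }
  rewrite <- E. exact (proj2_sig (g a)).
Qed.

Definition fim_to_fg : F -> FG X :=
  proj1_sig (constructive_indefinite_description _ (proj1 HF (FG X) fg_gen)).

Lemma fim_to_fg_spec :
  inv_monoid_morphism fim_to_fg /\ forall x, fim_to_fg (iF x) = fg_gen x.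
Proof. exact (proj2_sig (constructive_indefinite_description _ (proj1 HF (FG X) fg_gen))). Qed.

Lemma fim_to_fg_eval w : proj1_sig (fim_to_fg (eval_word iF w)) = act w [].
Proof.
  destruct fim_to_fg_spec as [Hm Hx].
  rewrite eval_word_morphism by exact Hm.
  rewrite (eval_word_ext _ _ fg_gen) by exact Hx. apply fg_eval_word.
Qed.

Lemma fim_to_fg_sigma_rel a b : sigma_rel a b -> fim_to_fg a = fim_to_fg b.
Proof.
  intros [e [He E]]. destruct fim_to_fg_spec as [[HM _] _].
  assert (He1 : fim_to_fg e = @im_one (FG X)).
  { apply fg_idempotent_one. change (fim_to_fg e ⋅ fim_to_fg e = fim_to_fg e).
    rewrite <- HM. f_equal. exact He. }
  apply (f_equal fim_to_fg) in E. rewrite !HM, He1, !im_mul1 in E. exact E.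
Qed.

Definition fim_max (a : F) : F := eval_word iF (proj1_sig (fim_to_fg a)).

Lemma fim_max_eval w : fim_max (eval_word iF w) = eval_word iF (act w []).
Proof. unfold fim_max. rewrite fim_to_fg_eval. reflexivity. Qed.

Lemma nat_le_fim_max a : nat_le a (fim_max a).
Proof. destruct (fim_generated a) as [w <-]. rewrite fim_max_eval. apply nat_le_eval_red. Qed.

Lemma fim_max_sigma_max a : sigma_max a (fim_max a).
Proof.
  split; [apply sigma_rel_of_nat_le, nat_le_fim_max|].
  intros b Hb. unfold fim_max. rewrite <- (fim_to_fg_sigma_rel Hb).
  apply nat_le_fim_max.
Qed.

Definition FIM : FInvMonoid := @Build_FInvMonoid F fim_max fim_max_sigma_max.

Lemma FIM_satisfies : satisfies (@fim_relations X) (M := FIM) iF.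
Proof.
  intros t s [w [r [Hr [-> ->]]]].
  destruct (eval_relation_fterms (N := FIM) iF w r) as [-> ->].
  simpl. rewrite fim_max_eval, <- (is_red_act_eq Hr). reflexivity.
Qed.

End FreeInverseMonoid.

Theorem mainTheorem12 (X : Type) (F : InvMonoid) (iF : X -> F)
  (P : FInvMonoid) (iP : X -> P) :
  is_free_inverse_monoid iF ->
  is_FInv_presentation (@fim_relations X) iP ->
  exists phi : P -> F,
    inv_monoid_morphism phi /\
    (forall a b, phi a = phi b -> a = b) /\
    (forall y : F, exists a : P, phi a = y) /\
    (forall x, phi (iP x) = iF x) /\
    (forall a : P, sigma_max (phi a) (phi (fim_m a))).
Proof.
  intros HF [HPsat [HPuniv HPuniq]].
  destruct (HPuniv (FIM HF) iF (FIM_satisfies HF)) as [phi [[Hphi Hphim] Hphix]].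
  destruct (proj1 HF P iP) as [psi [Hpsi Hpsix]].
  assert (Hpsi_eval : forall w, psi (eval_word iF w) = eval_word iP w).
  { intros w. rewrite eval_word_morphism by exact Hpsi. apply eval_word_ext, Hpsix. }
  assert (Hpsim : forall a, psi (fim_max HF a) = fim_m (psi a)).
  { intros a. destruct (fim_generated HF a) as [w <-].
    rewrite fim_max_eval, !Hpsi_eval.
    destruct (eval_relation_fterms iP w (act w [])) as [<- <-].
    apply HPsat. exists w, (act w []). auto using is_red_act. }
  assert (Hphipsi : forall y : F, phi (psi y) = y).
  { apply (proj2 HF F (fun y => phi (psi y)) (fun y => y));
      [exact (inv_monoid_morphism_comp Hpsi Hphi) | apply inv_monoid_morphism_id|].
    intros x. rewrite Hpsix. apply Hphix. }
  assert (Hpsiphi : forall a : P, psi (phi a) = a).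
  { apply (HPuniq P (fun a => psi (phi a)) (fun a => a)).
    - split; [exact (inv_monoid_morphism_comp Hphi Hpsi)|].
      intros a. rewrite Hphim. apply Hpsim.
    - split; [apply inv_monoid_morphism_id | reflexivity].
    - intros x. rewrite Hphix. apply Hpsix. }
  exists phi. refine (conj Hphi (conj _ (conj _ (conj Hphix _)))).
  - intros a b E. rewrite <- (Hpsiphi a), <- (Hpsiphi b), E. reflexivity.
  - intros y. exists (psi y). apply Hphipsi.
  - intros a. rewrite Hphim. apply fim_max_sigma_max.
Qed.
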